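(* Let $G=(V,E)$ be a network and consider an $\mathbb{F}_q$-valued rate-$\omega$ LNEC code on $G$, as in the context. Let $t\in T$ be a sink node with $\dim\Phi(t)=\omega$, and let $r$ be a nonnegative integer with $r\le C_t$. Then the code corrects at $t$ any error vector in $\mathcal{Z}(\mathcal{A}_t(r))$ if and only if it corrects at $t$ any error vector in $\mathcal{Z}(\mathcal{E}_t(r))$.
   Context: Network: $G=(V,E)$ is a finite directed acyclic graph (parallel edges allowed) with a single source node $s$ and a set of sink nodes $T\subseteq V\setminus\{s\}$; $s$ has no incoming edges and sink nodes have no outgoing edges. For an edge $e$, $\mathrm{tail}(e)$, $\mathrm{head}(e)$ are its tail and head; $\mathrm{In}(v)$, $\mathrm{Out}(v)$ are the incoming/outgoing edge sets of node $v$. A directed path is a sequence of edges $(e_1,\dots,e_m)$, $m\ge1$, with $\mathrm{tail}(e_{k+1})=\mathrm{head}(e_k)$. A cut separating node $v$ from node $u$ is a set of edges whose removal leaves no directed path from $u$ to $v$; $C_t$ is the minimum size of a cut separating sink $t$ from $s$. LNEC code: with rate $\omega\ge1$ and finite field $\mathbb{F}_q$, introduce imaginary source edges $d_1',\dots,d_\omega'$ ending at $s$ with $\mathrm{In}(s)=\{d_1',\dots,d_\omega'\}$, and for each $e\in E$ an imaginary error edge $e'$ with head $\mathrm{tail}(e)$; $E'=\{e':e\in E\}$ (for non-source nodes, $\mathrm{In}(v)$ contains only edges of $E$). The code is given by local encoding coefficients $k_{d,e}\in\mathbb{F}_q$ for $e\in E$, $d\in\mathrm{In}(\mathrm{tail}(e))$.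 Extended global encoding kernels are vectors in $\mathbb{F}_q^{\omega+|E|}$ indexed by $\{d_i'\}\cup E'$: $\tilde f_{d_i'}=1_{d_i'}$, $\tilde f_{e'}=1_{e'}$ (standard basis vectors), and recursively in topological order $\tilde f_e=\sum_{d\in\mathrm{In}(\mathrm{tail}(e))}k_{d,e}\tilde f_d+1_{e'}$. For sink $t$, $\mathrm{row}_t(d')=(\tilde f_{\hat e}(d'):\hat e\in\mathrm{In}(t))$, and $\Phi(t)=\langle\mathrm{row}_t(d_i'):1\le i\le\omega\rangle$. Error correction: an error vector $z=(z_e:e\in E)\in\mathbb{F}_q^{|E|}$ matches $\xi\subseteq E$ if $z_e=0$ for all $e\notin\xi$. For a source message $x\in\mathbb{F}_q^\omega$ and error vector $z$, the received vector at $t$ is $\tilde y_t(x,z)=(x\ z)\cdot\tilde F_t$ where $\tilde F_t=[\tilde f_e:e\in\mathrm{In}(t)]$. For a set $\mathcal{Z}$ of error vectors, the code corrects at $t$ any error vector in $\mathcal{Z}$ if for all $x,x'\in\mathbb{F}_q^\omega$ and $z,z'\in\mathcal{Z}$, $\tilde y_t(x,z)=\tilde y_t(x',z')$ implies $x=x'$. For a collection $\mathcal{C}$ of edge subsets, $\mathcal{Z}(\mathcal{C})=\{z\in\mathbb{F}_q^{|E|}: z\text{ matches some }\xi\in\mathcal{C}\}$. Graph notions: for $\xi\subseteq E$ and a node $u$, $A\subseteq E$ is a cut separating $u$ from $\xi$ if every directed path in $G$ whose first edge lies in $\xi$ and whose last edge has head $u$ contains an edge of $A$. $\mathrm{mincut}(\xi,u)$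 is the minimum size of such a cut. A minimum cut separating $u$ from $\xi$ is primary if it separates $u$ from every minimum cut separating $u$ from $\xi$; it exists and is unique. $\xi$ is primary for $u$ if $\xi$ is the primary minimum cut separating $u$ from $\xi$. $\mathcal{E}_t(r)=\{\xi\subseteq E:\mathrm{mincut}(\xi,t)\le r\}$, $\mathcal{A}_t(r)=\{\xi\subseteq E:|\xi|=r,\ \xi\text{ primary for }t\}$. *)

From mathcomp Require Import all_boot all_order all_algebra all_field.
Set Implicit Arguments. Unset Strict Implicit. Unset Printing Implicit Defensive.
Import GRing.Theory.
Local Open Scope ring_scope.

(* A network: node type V, edge type E (parallel edges allowed), with
   tail/head maps.  All notions below are parameterised by these maps. *)
Section Network.
Variables (V E : finType) (tail head : E -> V).

Definition dpath (e0 : E) (p : seq E) : bool :=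
  path (fun a b => tail b == head a) e0 p.

Definition acyclic : Prop :=
  forall e0 p, dpath e0 p -> head (last e0 p) != tail e0.

Definition network (s : V) (T : {set V}) : Prop :=
  [/\ acyclic, s \notin T,
      (forall e, head e != s) & (forall e, tail e \notin T)].

Definition node_cut (A : {set E}) (u v : V) : Prop :=
  forall e0 p, dpath e0 p -> tail e0 = u -> head (last e0 p) = v ->
    has (mem A) (e0 :: p).

Definition cut_from (A xi : {set E}) (u : V) : Prop :=
  forall e0 p, dpath e0 p -> e0 \in xi -> head (last e0 p) = u ->
    has (mem A) (e0 :: p).

Definition min_size (P : {set E} -> Prop) (m : nat) : Prop :=
  (exists A, P A /\ #|A| = m) /\ (forall A, P A -> (m <= #|A|)%N).

Definition is_Ct (s t : V) (c : nat) : Prop := min_size (fun A => node_cut A s t) c.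

Definition is_mincut (xi : {set E}) (u : V) (m : nat) : Prop :=
  min_size (fun A => cut_from A xi u) m.

Definition min_cut_from (A xi : {set E}) (u : V) : Prop :=
  cut_from A xi u /\ (forall B, cut_from B xi u -> (#|A| <= #|B|)%N).

Definition primary_cut (A xi : {set E}) (u : V) : Prop :=
  min_cut_from A xi u /\ (forall B, min_cut_from B xi u -> cut_from A B u).

Definition primary_for (xi : {set E}) (u : V) : Prop := primary_cut xi xi u.

Definition E_t (t : V) (r : nat) (xi : {set E}) : Prop :=
  exists m, is_mincut xi t m /\ (m <= r)%N.

Definition A_t (t : V) (r : nat) (xi : {set E}) : Prop :=
  #|xi| = r /\ primary_for xi t.

(* LNEC codes.  Coordinates of extended global encoding kernels are indexed by
   'I_w + E : inl i stands for d_i', inr e for the error edge e'. *)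
Variables (F : fieldType) (w : nat).

Definition unitv (j0 j : 'I_w + E) : F := if j == j0 then 1 else 0.

(* f is the family of extended global encoding kernels of the code with local
   coefficients k d e (d in E, head d = tail e) and ks i e = k_{d_i', e}
   (used when tail e = s); In(s) = {d_1',...,d_w'} and In(v) (v <> s) consists
   of the real edges with head v. *)
Definition is_gek (s : V) (ks : 'I_w -> E -> F) (k : E -> E -> F)
    (f : E -> 'I_w + E -> F) : Prop :=
  forall e j,
    f e j = (if tail e == s then \sum_(i < w) ks i e * unitv (inl i) j
             else \sum_(d | head d == tail e) k d e * f d j)
            + unitv (inr e) j.

(* Phi(t): the row space spanned by row_t(d_i'), written as a w x |E| matrix whose
   column for edge e is (f_e(d_i'))_i if e in In(t) and 0 otherwise (zero columns
   do not change the dimension). *)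
Definition Phi_mx (f : E -> 'I_w + E -> F) (t : V) : 'M[F]_(w, #|E|) :=
  \matrix_(i < w, j < #|E|)
    (let e := enum_val j in if head e == t then f e (inl i) else 0).

Definition received (f : E -> 'I_w + E -> F) (x : {ffun 'I_w -> F})
    (z : {ffun E -> F}) (e : E) : F :=
  \sum_(i < w) x i * f e (inl i) + \sum_(d : E) z d * f e (inr d).

Definition matches (z : {ffun E -> F}) (xi : {set E}) : Prop :=
  forall e, e \notin xi -> z e = 0.

Definition Zset (C : {set E} -> Prop) (z : {ffun E -> F}) : Prop :=
  exists xi, C xi /\ matches z xi.

Definition corrects (f : E -> 'I_w + E -> F) (t : V)
    (Z : {ffun E -> F} -> Prop) : Prop :=
  forall x x' z z', Z z -> Z z' ->
    (forall e, head e = t -> received f x z e = received f x' z' e) -> x = x'.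

End Network.

(* Let [mincut X] be the size of a minimum cut separating [t] from the edge set
   [X].  It is monotone and submodular (two cuts are uncrossed through their
   downstream regions) and grows by at most one when an edge is added.  Hence,
   starting from a minimum cut of [xi], where [mincut xi <= r <= C_t <= mincut E],
   one can add edges one by one to reach a set [rho] with [|rho| = mincut rho = r];
   the minimum cut of [rho] closest to [t] is then primary for [t], has size [r]
   and separates [t] from [xi].  On the algebraic side, the error part of the
   global kernels obeys a triangular recurrence along the acyclic graph, so the
   error received at [t] only depends on the error flow across a cut: an error
   supported on [xi] is indistinguishable at [t] from one supported on such a
   primary cut. *)

From mathcomp Require Import all_boot all_order all_algebra all_field.
From mathcomp Require Import boolp zify.
Import GRing.Theory.
Set Implicit Arguments. Unset Strict Implicit. Unset Printing Implicit Defensive.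

Section MinSize.
Variable E : finType.

Lemma min_size_exists (P : {set E} -> Prop) (A : {set E}) :
  P A -> exists m, min_size P m.
Proof.
move=> PA; have exP : exists n, `[< exists B, P B /\ #|B| = n >].
  by exists #|A|; apply/asboolP; exists A.
case: (ex_minnP exP) => m /asboolP Pm minm.
by exists m; split=> // B PB; apply: minm; apply/asboolP; exists B.
Qed.

Lemma min_size_uniq (P : {set E} -> Prop) m1 m2 :
  min_size P m1 -> min_size P m2 -> m1 = m2.
Proof.
move=> [[A1 [P1 <-]] min1] [[A2 [P2 <-]] min2].
by apply/eqP; rewrite eqn_leq min1 ?min2.
Qed.

End MinSize.

Section Acyclic.
Variables (V E : finType) (tail head : E -> V).
Hypothesis acyc : acyclic tail head.

Lemma dpath_uniq e0 p : dpath tail head e0 p -> uniq (e0 :: p).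
Proof.
elim: p e0 => [|e1 p IH] e0 Hp //.
rewrite cons_uniq IH; last by case/andP: Hp.
rewrite andbT; apply/negP => e0p; move: Hp.
case/splitPr: e0p => p1 p2; rewrite /dpath cat_path /= => /and3P[Hp1 he0 _].
by move: (acyc Hp1); rewrite eq_sym he0.
Qed.

Lemma acyclic_wf : well_founded (fun d e => head d = tail e).
Proof.
suff acc n e : (forall e0 p, dpath tail head e0 p -> last e0 p = e -> size p < n) ->
    Acc (fun d e => head d = tail e) e.
  move=> e; apply: (acc #|E|) => e0 p Hp _.
  by have := max_card (mem (e0 :: p)); rewrite (card_uniqP (dpath_uniq Hp)).
elim: n e => [|n IH] e bound; first by have := bound e [::] isT erefl.
constructor=> d hd; apply: IH => e0 p Hp ld.
have := bound e0 (rcons p e); rewrite size_rcons ltnS last_rcons; apply=> //.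
by rewrite /dpath rcons_path; apply/andP; split=> //=; rewrite ld hd.
Qed.

End Acyclic.

Section Cuts.
Variables (V E : finType) (tail head : E -> V) (t : V).
Local Notation dpath := (dpath tail head).
Local Notation cut A X := (cut_from tail head A X t).
Implicit Types (A B X Y Z : {set E}) (d e x : E) (p q : seq E).

Lemma dpath_suffix e0 p x : dpath e0 p -> x \in e0 :: p ->
  exists q, [/\ dpath x q, last x q = last e0 p & {subset x :: q <= e0 :: p}].
Proof.
move=> Hp; rewrite inE => /predU1P[->|xp]; first by exists p; split.
case/splitPr: xp Hp => p1 p2; rewrite /dpath cat_path /= => /and3P[_ _ Hp2].
by exists p2; split; rewrite ?last_cat // => y yq; rewrite in_cons mem_cat yq !orbT.
Qed.

Lemma cut_refl X : cut X X.
Proof. by move=> e0 p _ e0X _; rewrite /= e0X. Qed.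

Lemma cut_subset X Y : X \subset Y -> cut Y X.
Proof. by move=> sXY e0 p _ /(subsetP sXY) e0Y _; rewrite /= e0Y. Qed.

Lemma cut_meets A B e0 p : cut B A -> dpath e0 p -> head (last e0 p) = t ->
  has (mem A) (e0 :: p) -> has (mem B) (e0 :: p).
Proof.
move=> cBA Hp Hl /hasP[a ap aA]; have [q [Hq lq sq]] := dpath_suffix Hp ap.
case/hasP: (cBA a q Hq aA (etrans (congr1 head lq) Hl)) => b bq bB.
by apply/hasP; exists b; first exact: sq.
Qed.

Lemma cut_trans A B X : cut A X -> cut B A -> cut B X.
Proof.
by move=> cAX cBA e0 p Hp e0X Hl; apply: cut_meets cBA Hp Hl (cAX e0 p Hp e0X Hl).
Qed.

Definition downstream (A : {set E}) : {set E} :=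
  [set e | `[< exists p, [/\ dpath e p, head (last e p) = t
                         & ~~ has (mem A) (e :: p)] >]].

Lemma cut_downstream A X : cut A X <-> {in X, forall x, x \notin downstream A}.
Proof.
split=> [cAX x xX | dis e0 p Hp e0X Hl].
  by apply/negP; rewrite inE => /asboolP[p [Hp Hl]]; rewrite (cAX x p).
by apply/negPn/negP => Hn; move: (dis e0 e0X); rewrite inE; case/asboolP; exists p.
Qed.

Lemma notin_downstream A e : e \in A -> e \notin downstream A.
Proof. exact/(cut_downstream A A).1/cut_refl. Qed.

Lemma downstream_head A e : head e = t -> e \notin A -> e \in downstream A.
Proof.
by move=> het eA; rewrite inE; apply/asboolP; exists [::]; rewrite /= (negbTE eA).
Qed.

Lemma downstream_pred A d e :
  head d = tail e -> e \in downstream A -> d \notin A -> d \in downstream A.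
Proof.
move=> hd; rewrite !inE => /asboolP[p [Hp Hl Hn]] dA; apply/asboolP.
by exists (e :: p); rewrite /dpath /= hd eqxx /= (negbTE dA).
Qed.

Lemma downstream_sub A B : cut B A -> downstream B \subset downstream A.
Proof.
move=> cBA; apply/subsetP => e; rewrite !inE => /asboolP[p [Hp Hl Hn]].
by apply/asboolP; exists p; split=> //; apply: contra Hn; exact: cut_meets.
Qed.

Definition enters (Z : {set E}) (e : E) : bool :=
  (head e == t) || [exists e', (e' \in Z) && (tail e' == head e)].

Definition boundary (Z : {set E}) : {set E} := [set e | (e \notin Z) && enters Z e].

Lemma enters_sub Z Z' e : Z \subset Z' -> enters Z e -> enters Z' e.
Proof.
move=> sZ; rewrite /enters => /orP[-> // | /existsP[e' /andP[e'Z he']]].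
by apply/orP; right; apply/existsP; exists e'; rewrite (subsetP sZ) ?he'.
Qed.

Lemma enters_setU (Z1 Z2 : {set E}) e :
  enters (Z1 :|: Z2) e = enters Z1 e || enters Z2 e.
Proof.
apply/idP/orP => [| [] en]; [| exact: enters_sub (subsetUl _ _) en
                             | exact: enters_sub (subsetUr _ _) en].
rewrite /enters => /orP[het | /existsP[e' /andP[]]]; first by left; rewrite het.
by rewrite inE => /orP[] e'Z he'; [left | right];
  apply/orP; right; apply/existsP; exists e'; rewrite e'Z.
Qed.

Lemma boundary_downstream A : boundary (downstream A) \subset A.
Proof.
apply/subsetP => e; rewrite inE => /andP[eN en]; apply/negPn/negP => eA.
case/negP: eN; case/orP: en => [/eqP het | /existsP[e' /andP[e'N /eqP he']]].
  exact: downstream_head.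
exact: downstream_pred e'N eA.
Qed.

Lemma cut_boundary Z X : {in X, forall x, x \notin Z} -> cut (boundary Z) X.
Proof.
move=> dis e0 p Hp /dis; elim: p e0 Hp => [|e1 p IH] e0 Hp e0Z Hl.
  by rewrite /= inE e0Z /enters Hl eqxx.
move: Hp; rewrite /dpath /= => /andP[/eqP he1 Hp]; case e1Z: (e1 \in Z).
  have en : enters Z e0.
    by apply/orP; right; apply/existsP; exists e1; rewrite e1Z he1 eqxx.
  by rewrite /= inE e0Z en.
by apply/orP; right; apply: IH Hp _ Hl; rewrite e1Z.
Qed.

Lemma card_boundary_submod (Z1 Z2 : {set E}) :
  #|boundary (Z1 :|: Z2)| + #|boundary (Z1 :&: Z2)| <= #|boundary Z1| + #|boundary Z2|.
Proof.
have enI e : enters (Z1 :&: Z2) e -> enters Z1 e && enters Z2 e.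
  by move=> en; rewrite !(enters_sub _ en) ?subsetIl ?subsetIr.
rewrite -cardsUI -[leqRHS]cardsUI leq_add // subset_leq_card //;
  apply/subsetP => e; rewrite !inE enters_setU; move/(_ e): enI;
  by case: (e \in Z1) (e \in Z2) (enters Z1 e) (enters Z2 e) (enters _ e)
    => [] [] [] [] [].
Qed.

Definition mincut X : nat :=
  sval (cid (min_size_exists (P := fun A => cut A X) (@cut_refl X))).

Lemma mincutP X : is_mincut tail head X t (mincut X).
Proof. exact: svalP. Qed.

Lemma mincut_witness X : exists2 A, cut A X & #|A| = mincut X.
Proof. by have [[A [cAX <-]] _] := mincutP X; exists A. Qed.

Lemma mincut_min A X : cut A X -> mincut X <= #|A|.
Proof. exact: (mincutP X).2. Qed.

Lemma mincut_card X : mincut X <= #|X|.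
Proof. exact/mincut_min/cut_refl. Qed.

Lemma mincut_le_cut A X : cut A X -> mincut X <= mincut A.
Proof.
by move=> cAX; have [B cBA <-] := mincut_witness A; apply/mincut_min/(cut_trans cAX).
Qed.

Lemma mincut_setU1 e X : mincut (e |: X) <= (mincut X).+1.
Proof.
have [A cAX <-] := mincut_witness X.
apply: (@leq_trans #|e |: A|); last by rewrite cardsU1 -add1n leq_add2r leq_b1.
apply: mincut_min => e0 p Hp; rewrite in_setU1 => /predU1P[-> _ | e0X Hl].
  by rewrite /= setU11.
by move: (cAX e0 p Hp e0X Hl); apply: sub_has => a; exact: setU1r.
Qed.

(* Uncrossing: the boundaries of the union and the intersection of the
   downstream regions of two cuts are cuts of [X :&: Y] and [X :|: Y]. *)
Lemma mincut_submod X Y : mincut (X :|: Y) + mincut (X :&: Y) <= mincut X + mincut Y.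
Proof.
have [A /cut_downstream dA <-] := mincut_witness X.
have [B /cut_downstream dB <-] := mincut_witness Y.
apply: (@leq_trans (#|boundary (downstream A :&: downstream B)|
                    + #|boundary (downstream A :|: downstream B)|)).
  apply: leq_add; apply/mincut_min/cut_boundary => x; rewrite in_setU in_setI.
    by case/orP=> [/dA | /dB] /negbTE ->; rewrite ?andbF.
  by case/andP=> /dA /negbTE -> /dB /negbTE ->.
rewrite addnC; apply: leq_trans (card_boundary_submod _ _) _.
by rewrite leq_add // subset_leq_card // boundary_downstream.
Qed.

Lemma mincut_augment X : mincut X < mincut setT ->
  exists e, mincut (e |: X) = (mincut X).+1.
Proof.
move=> ltXT; case: (boolP [exists e, mincut (e |: X) == (mincut X).+1]).
  by case/existsP=> e /eqP; exists e.
(* If no single edge raises [mincut X], submodularity shows that no set does. *)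
move=> stuck; have step e : mincut (e |: X) <= mincut X.
  have := mincut_setU1 e X; rewrite leq_eqVlt ltnS => /predU1P[eq_e | //].
  by case/existsP: stuck; exists e; rewrite eq_e.
suff /(_ (enum E)) : forall s : seq E, mincut (X :|: [set x in s]) <= mincut X.
  have -> : X :|: [set x in enum E] = setT.
    by apply/setP => x; rewrite !inE mem_enum orbT.
  by rewrite leqNgt ltXT.
elim=> [|e s IH].
  by apply/mincut_le_cut/cut_subset/subsetP => x; rewrite !inE orbF.
have := mincut_submod (X :|: [set x in s]) (e |: X).
have -> : X :|: [set x in s] :|: (e |: X) = X :|: [set x in e :: s].
  by apply/setP => x; rewrite !inE; case: (x \in X) (x == e) (x \in s) => [] [] [].
have : mincut X <= mincut ((X :|: [set x in s]) :&: (e |: X)).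
  by apply/mincut_le_cut/cut_subset; rewrite subsetI subsetUl subsetUr.
by have := step e; move: IH; lia.
Qed.

Lemma mincut_setT_ge s r :
  (forall c, is_Ct tail head s t c -> r <= c) -> r <= mincut setT.
Proof.
move=> ge_r; have [c Ct] : exists c, is_Ct tail head s t c.
  by apply: (min_size_exists (A := setT)) => e0 p *; rewrite /= inE.
have [A cAT <-] := mincut_witness setT.
apply: leq_trans (ge_r c Ct) (Ct.2 A _) => e0 p Hp _ Hl.
exact: cAT Hp (in_setT e0) Hl.
Qed.

Lemma mincut_extend X n : mincut X = #|X| -> #|X| <= n -> n <= mincut setT ->
  exists Y, [/\ X \subset Y, mincut Y = n & #|Y| = n].
Proof.
move=> tightX /subnKC <-; elim: (n - #|X|) => [|k IH] leT.
  by exists X; split; rewrite ?addn0.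
have ltT : #|X| + k < mincut setT by rewrite -addnS.
have [Y [sXY mY cY]] := IH (ltnW ltT).
have [e me] : exists e, mincut (e |: Y) = (#|X| + k).+1.
  by rewrite -mY; apply: mincut_augment; rewrite mY.
exists (e |: Y); rewrite addnS; split=> //.
  exact: subset_trans sXY (subsetUr _ _).
apply/eqP; rewrite eqn_leq -{2}me mincut_card andbT cardsU1 cY.
by case: (e \notin Y).
Qed.

Lemma exists_primary_mincut X :
  exists B, [/\ cut B X, #|B| = mincut X & primary_for tail head B t].
Proof.
pose good n := `[< exists B, [/\ cut B X, #|B| = mincut X & #|downstream B| = n] >].
have ex_good : exists n, good n.
  have [B cBX cardB] := mincut_witness X.
  by exists #|downstream B|; apply/asboolP; exists B.
(* A minimum cut of [X] whose downstream region is smallest is primary. *)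
case: (ex_minnP ex_good) => n /asboolP[B [cBX cardB dB]] min_n.
have B_min C : cut C B -> #|B| <= #|C|.
  by move=> cCB; rewrite cardB; apply/mincut_min/(cut_trans cBX).
exists B; split => //; split; first by split; [exact: cut_refl | exact: B_min].
move=> C [cCB minC]; apply/cut_downstream => c cC; apply/negP => cdB.
have cardC : #|C| = mincut X.
  by apply/eqP; rewrite eqn_leq -cardB (minC B (@cut_refl B)) B_min.
have ltCB : downstream C \proper downstream B.
  apply/properP; split; first exact: downstream_sub.
  by exists c => //; exact: notin_downstream.
have : n <= #|downstream C|.
  by apply: min_n; apply/asboolP; exists C; split => //; exact: cut_trans cBX cCB.
by rewrite -dB leqNgt proper_card.
Qed.

Lemma E_t_cut_by_A_t r xi : r <= mincut setT -> E_t tail head t r xi ->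
  exists2 rho, A_t tail head t r rho & cut rho xi.
Proof.
move=> le_rT [m [mxi le_mr]].
move: le_mr; rewrite -(min_size_uniq (mincutP xi) mxi) => le_r.
have [A cAxi cardA] := mincut_witness xi.
have tightA : mincut A = #|A|.
  by apply/eqP; rewrite eqn_leq mincut_card cardA (mincut_le_cut cAxi).
have [Y [sAY mY cardY]] :=
  mincut_extend tightA (leq_trans (eq_leq cardA) le_r) le_rT.
have [B [cBY cardB primB]] := exists_primary_mincut Y.
exists B; first by split; rewrite // cardB.
exact: cut_trans (cut_trans cAxi (cut_subset sAY)) cBY.
Qed.

Lemma A_t_E_t r xi : A_t tail head t r xi -> E_t tail head t r xi.
Proof.
case=> card_xi [[_ min_xi] _]; exists r; split => //; split.
  by exists xi; split; first exact: cut_refl.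
by rewrite -card_xi.
Qed.

End Cuts.

Section Recurrence.
Variables (V E : finType) (tail head : E -> V).
Hypothesis acyc : acyclic tail head.
Local Open Scope ring_scope.

Section Ring.
Variables (F : pzRingType) (k : E -> E -> F).

Definition inflow (Y : E -> F) (e : E) : F := \sum_(d | head d == tail e) k d e * Y d.

Lemma recurrence_eq0 (c : pred E) (D : E -> F) :
  (forall e, D e = if c e then inflow D e else 0) -> forall e, D e = 0.
Proof.
move=> HD e; elim/(well_founded_induction (acyclic_wf acyc)): e => e IH.
by rewrite HD; case: (c e) => //; apply: big1 => d /eqP hd; rewrite IH ?mulr0.
Qed.

Lemma recurrence_uniq (c : pred E) (b Y1 Y2 : E -> F) :
  (forall e, Y1 e = (if c e then inflow Y1 e else 0) + b e) ->
  (forall e, Y2 e = (if c e then inflow Y2 e else 0) + b e) -> Y1 =1 Y2.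
Proof.
move=> H1 H2 e; apply/eqP; rewrite -subr_eq0; apply/eqP; move: e.
apply: (@recurrence_eq0 c) => e; rewrite {1}H1 {1}H2 opprD addrACA subrr addr0.
case: (c e); last exact: subr0.
by rewrite /inflow -sumrB; apply: eq_bigr => d _; rewrite mulrBr.
Qed.

End Ring.

Lemma recurrence_solvable (F : finPzRingType) (k : E -> E -> F) (c : pred E)
    (b : E -> F) :
  exists Y : {ffun E -> F}, forall e, Y e = (if c e then inflow k Y e else 0) + b e.
Proof.
pose T (Y : {ffun E -> F}) := [ffun e => Y e - (if c e then inflow k Y e else 0)].
have T_inj : injective T.
  move=> Y1 Y2 eqT; apply/ffunP; apply: (@recurrence_uniq _ k c (T Y1)) => e.
    by rewrite ffunE addrC subrK.
  by rewrite eqT ffunE addrC subrK.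
have [Tinv _ TK] := injF_bij T_inj.
exists (Tinv [ffun e => b e]) => e.
by move/ffunP/(_ e): (TK [ffun e => b e]); rewrite !ffunE => <-; rewrite addrC subrK.
Qed.

End Recurrence.

Section ErrorPropagation.
Variables (V E : finType) (tail head : E -> V) (s t : V) (F : finFieldType) (w : nat).
Variables (ks : 'I_w -> E -> F) (k : E -> E -> F) (f : E -> 'I_w + E -> F).
Hypotheses (acyc : acyclic tail head) (gek : is_gek tail head s ks k f).
Local Open Scope ring_scope.
Local Notation inflow := (inflow tail head k).

Definition error_part (z : {ffun E -> F}) (e : E) : F := \sum_d z d * f e (inr d).

Lemma receivedE x z e :
  received f x z e = \sum_(i < w) x i * f e (inl i) + error_part z e.
Proof. by []. Qed.

Lemma error_part_rec z e :
  error_part z e = (if tail e != s then inflow (error_part z) e else 0) + z e.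
Proof.
rewrite /error_part; under eq_bigr => d _ do rewrite gek mulrDr.
rewrite big_split /=; congr (_ + _).
  case: (tail e == s) => /=.
    by apply: big1 => d _; rewrite big1 ?mulr0 // => i _; rewrite /unitv mulr0.
  under eq_bigr => d _ do rewrite mulr_sumr.
  rewrite exchange_big /=; apply: eq_bigr => d _; rewrite mulr_sumr.
  by apply: eq_bigr => d' _; rewrite mulrCA.
rewrite (bigD1 e) //= big1 ?addr0; first by rewrite /unitv eqxx mulr1.
by move=> d /negbTE nde; rewrite /unitv; case: eqP => [[/eqP]|_]; rewrite ?nde ?mulr0.
Qed.

(* [zeta] is read off the solution [Y] of the recurrence in which the values on
   [rho] are prescribed to be those of [error_part z]; downstream of [rho] the
   two recurrences coincide. *)
Lemma reroute_error (rho xi : {set E}) (z : {ffun E -> F}) :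
  cut_from tail head rho xi t -> matches z xi ->
  exists2 zeta, matches zeta rho &
    forall e, head e = t -> error_part zeta e = error_part z e.
Proof.
move=> cut_rho zxi.
have [Y HY] := recurrence_solvable acyc k [pred e | (e \notin rho) && (tail e != s)]
  (fun e => if e \in rho then error_part z e else 0).
pose zeta := [ffun e => Y e - (if tail e != s then inflow Y e else 0)].
have zeta_rho : matches zeta rho.
  by move=> e /negbTE erho; rewrite ffunE HY /= erho addr0 subrr.
have Y_zeta : Y =1 error_part zeta.
  apply: (recurrence_uniq acyc (k := k) (c := fun e => tail e != s) (b := zeta))
    => e.
    by rewrite ffunE addrC subrK.
  exact: error_part_rec.
have Y_z e : (e \in rho) || (e \in downstream tail head t rho) -> Y e = error_part z e.
  elim/(well_founded_induction (acyclic_wf acyc)): e => e IH.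
  case erho: (e \in rho) => /= edown; first by rewrite HY /= erho add0r.
  have ze : z e = 0.
    by apply: zxi; apply: contraL edown; exact: (cut_downstream tail head t rho xi).1.
  rewrite HY error_part_rec ze /= erho /= !addr0; case: (tail e != s) => //.
  apply: eq_bigr => d /eqP hd; congr (_ * _); apply: IH => //.
  by case drho: (d \in rho) => //=; exact: downstream_pred hd edown (negbT drho).
exists zeta => // e het; rewrite -Y_zeta; apply: Y_z.
by case erho: (e \in rho) => //=; exact: downstream_head het (negbT erho).
Qed.

Lemma corrects_indistinguishable (Z1 Z2 : {ffun E -> F} -> Prop) :
  (forall z, Z2 z -> exists2 z', Z1 z' &
     forall x e, head e = t -> received f x z' e = received f x z e) ->
  corrects head f t Z1 -> corrects head f t Z2.
Proof.
move=> sim HZ1 x x' z z' /sim[y Zy ey] /sim[y' Zy' ey'] same.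
by apply: (HZ1 x x' y y') => // e het; rewrite ey // ey' // same.
Qed.

End ErrorPropagation.

Theorem theorem11 (V E : finType) (tail head : E -> V) (s : V) (T : {set V})
    (F : finFieldType) (w : nat) (ks : 'I_w -> E -> F) (k : E -> E -> F)
    (f : E -> 'I_w + E -> F) (t : V) (r : nat) :
  network tail head s T ->
  (0 < w)%N ->
  is_gek tail head s ks k f ->
  t \in T ->
  \rank (Phi_mx head f t) = w ->
  (forall c, is_Ct tail head s t c -> (r <= c)%N) ->
  (corrects head f t (Zset (A_t tail head t r)) <->
   corrects head f t (Zset (E_t tail head t r))).
Proof.
move=> [acyc _ _ _] _ gek _ _ ge_r; have le_rT := mincut_setT_ge ge_r.
split; apply: corrects_indistinguishable => z [xi [xi_r zxi]].
- have [rho rho_r cut_rho] := E_t_cut_by_A_t le_rT xi_r.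
  have [zeta zeta_rho same] := reroute_error acyc gek cut_rho zxi.
  by exists zeta => [|x e het]; [exists rho | rewrite !receivedE same].
- by exists z => //; exists xi; split => //; exact: A_t_E_t.
Qed.
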